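(* Assume the Composite Assumption and the KŁ-for-$g$ Assumption (see context), and let $0<\lambda\le\frac{2\tilde\delta}{\ell_h^2\sqrt{d_h}}$. Then for every $x\in\mathcal X$, $F^\lambda(x,\cdot)$ satisfies the extended KŁ property with parameters $\mu$ and $\theta$: $$\mathrm{dist}\big(0,-\nabla_yF^\lambda(x,y)+\mathcal N_{\mathcal Y}(y)\big)\ge\mu\Big(\max_{y'\in\mathcal Y}F^\lambda(x,y')-F^\lambda(x,y)\Big)^\theta\quad\forall y\in\mathcal Y.$$
   Context: Let $\mathcal X\subseteq\mathbb R^{d_x}$, $\mathcal Y\subseteq\mathbb R^{d_y}$ be nonempty closed convex sets and $\mathbb P$ a distribution with support $\Xi$. Let $\varphi:\mathbb R^{d_h}\times\mathbb R^{d_y}\times\Xi\to\mathbb R$, $h=(h_1,\dots,h_{d_h}):\mathbb R^{d_c}\to\mathbb R^{d_h}$, $c:\mathbb R^{d_x}\times\Xi\to\mathbb R^{d_c}$, with $\varphi$ and $c$ differentiable. Composite Assumption: (i) $\mathcal X$ compact with diameter $D_{\mathcal X}$; (ii) $\mathcal Y$ compact with diameter $D_{\mathcal Y}$; (iii) each $c(\cdot;\xi)$ is $\ell_c$-Lipschitz; (iv) each $h_j$ is convex and $\ell_h$-Lipschitz; (v) each $\varphi(\cdot,\cdot;\xi)$ is nondecreasing in its first argument and $\ell_\varphi$-Lipschitz; (vi) $\mathbb E\|\nabla_xc(x_1;\xi)-\nabla_xc(x_2;\xi)\|^2\le L_c^2\|x_1-x_2\|^2$; (vii) $\nabla_1\varphi$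 and $\nabla_y\varphi$ are $L_\varphi$-Lipschitz jointly in $(u,y)$ in the sense $\|\nabla\varphi(u_1,y_1;\xi)-\nabla\varphi(u_2,y_2;\xi)\|^2\le L_\varphi^2(\|u_1-u_2\|^2+\|y_1-y_2\|^2)$. KŁ-for-$g$ Assumption: there exist $\tilde\delta>0$, $\mu>0$, $\theta\in[0,1]$ such that for all $x\in\mathcal X$ and all $u:\Xi\to\mathbb R^{d_h}$ with $\|u(\xi)-h(c(x;\xi))\|\le\tilde\delta$ for all $\xi\in\Xi$, the function $g(u,y):=\mathbb E_{\xi\sim\mathbb P}[\varphi(u(\xi),y;\xi)]$ satisfies $\mathrm{dist}(0,-\nabla_yg(u,y)+\mathcal N_{\mathcal Y}(y))\ge\mu[\max_{y'\in\mathcal Y}g(u,y')-g(u,y)]^\theta$ for all $y\in\mathcal Y$. Smoothing: $h^\lambda_j(w)=\min_{q}\{h_j(q)+\frac1{2\lambda}\|w-q\|^2\}$, $h^\lambda=(h^\lambda_j)_j$, $F^\lambda(x,y)=\mathbb E_{\xi\sim\mathbb P}[\varphi(h^\lambda(c(x;\xi)),y;\xi)]$. $\mathcal N_{\mathcal Y}$ is the normal cone. *)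

From HB Require Import structures.
From mathcomp Require Import all_boot all_order all_algebra.
From mathcomp Require Import all_classical all_reals all_analysis.
Set Implicit Arguments. Unset Strict Implicit. Unset Printing Implicit Defensive.
Import Order.TTheory GRing.Theory Num.Theory.
Import numFieldNormedType.Exports.
Local Open Scope classical_set_scope.
Local Open Scope ring_scope.

Section Defs.
Variable R : realType.

Definition enorm n (v : 'rV[R]_n) : R := Num.sqrt (\sum_(i < n) v ord0 i ^+ 2).
Definition dotp n (u v : 'rV[R]_n) : R := \sum_(i < n) u ord0 i * v ord0 i.

Definition grad n (f : 'rV[R]_n -> R) (x : 'rV[R]_n) : 'rV[R]_n :=
  \row_(i < n) derive f x (delta_mx ord0 i).

Definition jac m n (f : 'rV[R]_n -> 'rV[R]_m) (x : 'rV[R]_n) : 'M[R]_(m, n) :=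
  \matrix_(i < m, j < n) derive (fun z => f z ord0 i) x (delta_mx ord0 j).
Definition frob m n (A : 'M[R]_(m, n)) : R :=
  Num.sqrt (\sum_(i < m) \sum_(j < n) A i j ^+ 2).

Definition cvx_set n (S : set 'rV[R]_n) : Prop :=
  forall a b t, S a -> S b -> 0 <= t <= 1 -> S (t *: a + (1 - t) *: b).

Definition cvx_fun n (f : 'rV[R]_n -> R) : Prop :=
  forall a b t, 0 <= t <= 1 -> f (t *: a + (1 - t) *: b) <= t * f a + (1 - t) * f b.

Definition lip_vec n m (L : R) (f : 'rV[R]_n -> 'rV[R]_m) : Prop :=
  forall a b, enorm (f a - f b) <= L * enorm (a - b).

Definition lip_real n (L : R) (f : 'rV[R]_n -> R) : Prop :=
  forall a b, `|f a - f b| <= L * enorm (a - b).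

Definition diam n (S : set 'rV[R]_n) : R :=
  sup [set r | exists a b, S a /\ S b /\ r = enorm (a - b)].

Definition normal_cone n (S : set 'rV[R]_n) (y : 'rV[R]_n) : set 'rV[R]_n :=
  [set v | forall y', S y' -> dotp v (y' - y) <= 0].

Definition dist0_shift n (w : 'rV[R]_n) (N : set 'rV[R]_n) : R :=
  inf [set r | exists v, N v /\ r = enorm (- w + v)].

Definition max_on n (S : set 'rV[R]_n) (f : 'rV[R]_n -> R) : R := sup (f @` S).

Definition moreau n (hj : 'rV[R]_n -> R) (lam : R) (w : 'rV[R]_n) : R :=
  inf [set r | exists q, r = hj q + enorm (w - q) ^+ 2 / (2 * lam)].

Definition hsmooth dc dh (h : 'rV[R]_dc -> 'rV[R]_dh) (lam : R) (w : 'rV[R]_dc)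
  : 'rV[R]_dh := \row_(j < dh) moreau (fun q => h q ord0 j) lam w.

End Defs.

Section Expect.
Context {R : realType} {d : measure_display} {T : measurableType d}.

Definition gfun (P : probability T R) dh dy
  (phi : 'rV[R]_dh -> 'rV[R]_dy -> T -> R) (u : T -> 'rV[R]_dh) (y : 'rV[R]_dy) : R :=
  Rintegral P setT (fun xi => phi (u xi) y xi).

Definition Flam (P : probability T R) dx dy dc dh
  (phi : 'rV[R]_dh -> 'rV[R]_dy -> T -> R) (h : 'rV[R]_dc -> 'rV[R]_dh)
  (c : 'rV[R]_dx -> T -> 'rV[R]_dc) (lam : R) (x : 'rV[R]_dx) (y : 'rV[R]_dy) : R :=
  Rintegral P setT (fun xi => phi (hsmooth h lam (c x xi)) y xi).

End Expect.

From HB Require Import structures.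
From mathcomp Require Import all_boot all_order all_algebra.
From mathcomp Require Import all_classical all_reals all_analysis.
From mathcomp Require Import lra.
Set Implicit Arguments. Unset Strict Implicit. Unset Printing Implicit Defensive.
Import Order.TTheory GRing.Theory Num.Theory.
Import numFieldNormedType.Exports.
Local Open Scope classical_set_scope.
Local Open Scope ring_scope.

(* F^lam(x, .) is g(u, .) for the particular choice
   u(xi) = h^lam(c(x; xi)).  The Moreau envelope of an ell_h-Lipschitz function
   stays within lam ell_h^2 / 2 of it, so every component of u(xi) - h(c(x; xi))
   is that small, its norm is at most sqrt(d_h) lam ell_h^2 / 2 <= delta, and the
   KL property of g applies verbatim. *)

Section Smoothing.
Variable R : realType.

Lemma enorm0 n : enorm (0 : 'rV[R]_n) = 0.
Proof. by rewrite /enorm big1 ?sqrtr0 // => i _; rewrite mxE expr0n. Qed.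

Lemma enorm_le_sqrt_dim n (v : 'rV[R]_n) K :
  0 <= K -> (forall i, `|v ord0 i| <= K) -> enorm v <= Num.sqrt n%:R * K.
Proof.
move=> K0 vK.
have -> : Num.sqrt n%:R * K = Num.sqrt (\sum_(i < n) K ^+ 2).
  by rewrite sumr_const card_ord -[K ^+ 2 *+ n]mulr_natl sqrtrM ?ler0n // sqrtr_sqr ger0_norm.
rewrite /enorm ler_sqrt; last by apply: sumr_ge0 => i _; apply: sqr_ge0.
apply: ler_sum => i _; rewrite -real_normK ?num_real //.
by rewrite lerXn2r ?nnegrE.
Qed.

Lemma mul_le_moreau_penalty (L e lam : R) :
  0 < lam -> L * e <= lam * L ^+ 2 / 2 + e ^+ 2 / (2 * lam).
Proof.
move=> lam0.
have penaltyE : e ^+ 2 / (2 * lam) * (2 * lam) = e ^+ 2.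
  by rewrite mulfVK // mulf_neq0 // gt_eqF.
have := sqr_ge0 (e - lam * L); nra.
Qed.

Section Moreau.
Variables (n : nat) (f : 'rV[R]_n -> R) (L lam : R) (w : 'rV[R]_n).
Hypotheses (lam0 : 0 < lam) (fL : lip_real L f).

Let penalized := [set r | exists q, r = f q + enorm (w - q) ^+ 2 / (2 * lam)].

Let penalized_w : penalized (f w).
Proof. by exists w; rewrite subrr enorm0 expr0n /= mul0r addr0. Qed.

Let penalized_lbound : lbound penalized (f w - lam * L ^+ 2 / 2).
Proof.
move=> _ [q ->].
have fwq : f w - f q <= L * enorm (w - q).
  by apply: le_trans (fL w q); apply: ler_norm.
have := mul_le_moreau_penalty L (enorm (w - q)) lam0; lra.
Qed.

Lemma moreau_dist_lip : `|f w - moreau f lam w| <= lam * L ^+ 2 / 2.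
Proof.
have upper : moreau f lam w <= f w.
  by apply: ge_inf => //; exists (f w - lam * L ^+ 2 / 2).
have lower : f w - lam * L ^+ 2 / 2 <= moreau f lam w.
  by apply: lb_le_inf => //; exists (f w).
rewrite ger0_norm; lra.
Qed.

End Moreau.

Lemma hsmooth_dist_lip dc dh (h : 'rV[R]_dc -> 'rV[R]_dh) L lam w :
  0 < lam -> (forall j, lip_real L (fun v => h v ord0 j)) ->
  enorm (hsmooth h lam w - h w) <= Num.sqrt dh%:R * (lam * L ^+ 2 / 2).
Proof.
move=> lam0 hL; apply: enorm_le_sqrt_dim => [|j].
  by rewrite mulr_ge0 ?invr_ge0 ?ler0n // mulr_ge0 ?sqr_ge0 ?ltW.
by rewrite !mxE distrC; apply: moreau_dist_lip.
Qed.

(* If [L ^+ 2 * Num.sqrt n%:R = 0] the bound on [lam] reads [lam <= 0], since [x / 0 = 0]. *)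
Lemma smoothing_gap_le (n : nat) (L lam delta : R) :
  0 < lam -> lam <= 2 * delta / (L ^+ 2 * Num.sqrt n%:R) ->
  Num.sqrt n%:R * (lam * L ^+ 2 / 2) <= delta.
Proof.
set s := L ^+ 2 * Num.sqrt n%:R => lam0.
have [s0 | s_neq0] := eqVneq s 0; first by rewrite s0 invr0 mulr0; lra.
have s_gt0 : 0 < s by rewrite lt_def s_neq0 mulr_ge0 ?sqr_ge0 ?sqrtr_ge0.
have -> : Num.sqrt n%:R * (lam * L ^+ 2 / 2) = lam * s / 2 by rewrite /s; lra.
rewrite ler_pdivlMr //; lra.
Qed.

End Smoothing.

Lemma Flam_gfun (R : realType) (d : measure_display) (T : measurableType d)
  (P : probability T R) dx dy dc dh (phi : 'rV[R]_dh -> 'rV[R]_dy -> T -> R)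
  (h : 'rV[R]_dc -> 'rV[R]_dh) (c : 'rV[R]_dx -> T -> 'rV[R]_dc) lam x :
  Flam P phi h c lam x = gfun P phi (fun xi => hsmooth h lam (c x xi)).
Proof. by []. Qed.

Theorem lemmaB4 (R : realType) (d : measure_display) (T : measurableType d)
  (P : probability T R) (dx dy dh dc : nat)
  (X : set 'rV[R]_dx) (Y : set 'rV[R]_dy)
  (phi : 'rV[R]_dh -> 'rV[R]_dy -> T -> R)
  (h : 'rV[R]_dc -> 'rV[R]_dh) (c : 'rV[R]_dx -> T -> 'rV[R]_dc)
  (DX DY ell_c ell_h ell_phi Lc Lphi : R)
  (delta mu theta lam : R)
  (* X, Y nonempty closed convex *)
  (hX0 : X !=set0) (hXc : closed X) (hXcv : cvx_set X)
  (hY0 : Y !=set0) (hYc : closed Y) (hYcv : cvx_set Y)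
  (* differentiability of phi (jointly) and of c *)
  (hphid : forall xi u y,
      differentiable (fun p : 'rV[R]_dh * 'rV[R]_dy => phi p.1 p.2 xi) (u, y))
  (hcd : forall xi x, differentiable (c^~ xi) x)
  (* Composite Assumption (i)-(vii) *)
  (hXcomp : compact X) (hDX : diam X = DX)
  (hYcomp : compact Y) (hDY : diam Y = DY)
  (hc_lip : forall xi, lip_vec ell_c (c^~ xi))
  (hh_conv : forall j : 'I_dh, cvx_fun (fun w => h w ord0 j))
  (hh_lip : forall j : 'I_dh, lip_real ell_h (fun w => h w ord0 j))
  (hphi_mono : forall xi y (u1 u2 : 'rV[R]_dh),
      (forall j, u1 ord0 j <= u2 ord0 j) -> phi u1 y xi <= phi u2 y xi)
  (hphi_lip : forall xi u1 u2 y1 y2,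
      `|phi u1 y1 xi - phi u2 y2 xi|
        <= ell_phi * Num.sqrt (enorm (u1 - u2) ^+ 2 + enorm (y1 - y2) ^+ 2))
  (hc_grad : forall x1 x2,
      (\int[P]_xi ((frob (jac (c^~ xi) x1 - jac (c^~ xi) x2)) ^+ 2)%:E
        <= (Lc ^+ 2 * enorm (x1 - x2) ^+ 2)%:E)%E)
  (hphi_grad : forall xi u1 u2 y1 y2,
      enorm (grad (fun u => phi u y1 xi) u1 - grad (fun u => phi u y2 xi) u2) ^+ 2
      + enorm (grad (fun y => phi u1 y xi) y1 - grad (fun y => phi u2 y xi) y2) ^+ 2
        <= Lphi ^+ 2 * (enorm (u1 - u2) ^+ 2 + enorm (y1 - y2) ^+ 2))
  (* KL-for-g Assumption *)
  (hdelta : 0 < delta) (hmu : 0 < mu) (htheta : 0 <= theta <= 1)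
  (hKL : forall x (u : T -> 'rV[R]_dh),
      X x -> (forall xi, enorm (u xi - h (c x xi)) <= delta) ->
      forall y, Y y ->
        dist0_shift (grad (gfun P phi u) y) (normal_cone Y y)
          >= mu * powR (max_on Y (gfun P phi u) - gfun P phi u y) theta)
  (* smoothing parameter *)
  (hlam0 : 0 < lam)
  (hlam : lam <= 2 * delta / (ell_h ^+ 2 * Num.sqrt (dh%:R))) :
  forall x, X x -> forall y, Y y ->
    dist0_shift (grad (Flam P phi h c lam x) y) (normal_cone Y y)
      >= mu * powR (max_on Y (Flam P phi h c lam x) - Flam P phi h c lam x y) theta.
Proof.
move=> x Xx y Yy; rewrite Flam_gfun.
apply: (hKL _ _ Xx _ _ Yy) => xi.
apply: le_trans (hsmooth_dist_lip (c x xi) hlam0 hh_lip) _.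
exact: smoothing_gap_le.
Qed.
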